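(* Assume the setting described in the context and let $\mathscr K\subseteq\mathbb R^{\mathfrak d}$ be compact. Then there exists $\mathscr L\in\mathbb R$ such that for all $\theta,\vartheta\in\mathscr K$ it holds that $$|\mathcal L_\infty(\theta)-\mathcal L_\infty(\vartheta)|+\sup_{x\in[a,b]^{\ell_0}}\|\mathcal N^{L,\theta}_\infty(x)-\mathcal N^{L,\vartheta}_\infty(x)\|\le\mathscr L\|\theta-\vartheta\|.$$
   Context: Setting. Let $L,\mathfrak d\in\mathbb N=\{1,2,\dots\}$, $(\ell_k)_{k\in\mathbb N_0}\subseteq\mathbb N$, $a\in\mathbb R$, $b\in(a,\infty)$ with $\mathfrak d=\sum_{k=1}^L\ell_k(\ell_{k-1}+1)$; let $\mathbf d_k=\sum_{h=1}^k\ell_h(\ell_{h-1}+1)$ for $k\in\mathbb N_0$. For $\theta=(\theta_1,\dots,\theta_{\mathfrak d})\in\mathbb R^{\mathfrak d}$, $k\in\{1,\dots,L\}$, $i\in\{1,\dots,\ell_k\}$, $j\in\{1,\dots,\ell_{k-1}\}$ let $\mathfrak w^{k,\theta}_{i,j}=\theta_{(i-1)\ell_{k-1}+j+\mathbf d_{k-1}}$ and $\mathfrak b^{k,\theta}_i=\theta_{\ell_k\ell_{k-1}+i+\mathbf d_{k-1}}$, let $\mathfrak w^{k,\theta}=(\mathfrak w^{k,\theta}_{i,j})_{i,j}\in\mathbb R^{\ell_k\times\ell_{k-1}}$, $\mathfrak b^{k,\theta}=(\mathfrak b^{k,\theta}_1,\dots,\mathfrak b^{k,\theta}_{\ell_k})\in\mathbb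 R^{\ell_k}$, and $\mathcal A^\theta_k(x)=\mathfrak b^{k,\theta}+\mathfrak w^{k,\theta}x$. Let $\mathfrak M_\infty(x_1,\dots,x_n)=(\max\{x_1,0\},\dots,\max\{x_n,0\})$ and $\|\cdot\|$ the Euclidean norm. Define $\mathcal N^{k,\theta}_\infty\colon\mathbb R^{\ell_0}\to\mathbb R^{\ell_k}$, $k\in\{1,\dots,L\}$, by $\mathcal N^{1,\theta}_\infty=\mathcal A^\theta_1$ and $\mathcal N^{k+1,\theta}_\infty(x)=\mathcal A^\theta_{k+1}(\mathfrak M_\infty(\mathcal N^{k,\theta}_\infty(x)))$. Let $\mu$ be a measure on the Borel $\sigma$-algebra of $[a,b]^{\ell_0}$ with $\mu([a,b]^{\ell_0})\in\mathbb R$, let $f\colon[a,b]^{\ell_0}\to\mathbb R^{\ell_L}$ be measurable, and let $\mathcal L_\infty\colon\mathbb R^{\mathfrak d}\to\mathbb R$, $\mathcal L_\infty(\theta)=\int_{[a,b]^{\ell_0}}\|\mathcal N^{L,\theta}_\infty(x)-f(x)\|^2\,\mu(dx)$ (these integrals are real numbers as part of the setting). *)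

From HB Require Import structures.
From mathcomp Require Import all_boot all_order all_algebra.
From mathcomp Require Import all_classical all_reals all_analysis.

Import Order.TTheory GRing.Theory Num.Theory.
Import numFieldNormedType.Exports.
Local Open Scope classical_set_scope.
Local Open Scope ring_scope.

Section ANN.
Variable R : realType.

Definition euclid (n : nat) (v : 'I_n -> R) : R := Num.sqrt (\sum_(i < n) v i ^+ 2).

Definition dpar (l : nat -> nat) (k : nat) : nat :=
  (\sum_(1 <= h < k.+1) l h * (l h.-1 + 1))%N.

(* theta_n for a 0-indexed position n (0 if out of range, never used) *)
Definition th_at (dd : nat) (th : 'rV[R]_dd) (n : nat) : R :=
  if @insub nat (fun m => m < dd)%N 'I_dd n is Some i then th 0 i else 0.

(* weights w^{k,theta}_{i,j} and biases b^{k,theta}_i, with 0-indexed i, j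
   (paper: theta_{(i-1) l_{k-1} + j + d_{k-1}}, theta_{l_k l_{k-1} + i + d_{k-1}}
    with 1-indexed i, j) *)
Definition wgt (l : nat -> nat) (dd : nat) (th : 'rV[R]_dd) (k : nat)
  (i : 'I_(l k)) (j : 'I_(l k.-1)) : R :=
  th_at dd th (i * l k.-1 + j + dpar l k.-1)%N.
Definition bias (l : nat -> nat) (dd : nat) (th : 'rV[R]_dd) (k : nat)
  (i : 'I_(l k)) : R :=
  th_at dd th (l k * l k.-1 + i + dpar l k.-1)%N.

Definition act (k : nat) (y : R) : R := if k == 0%N then y else Num.max y 0.

Fixpoint realization (l : nat -> nat) (dd : nat) (th : 'rV[R]_dd) (k : nat)
  : (l 0%N).-tuple R -> 'I_(l k) -> R :=
  match k return (l 0%N).-tuple R -> 'I_(l k) -> R with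
  | 0%N => fun x i => tnth x i
  | k'.+1 => fun x i =>
      bias l dd th k'.+1 i + \sum_(j < l k') wgt l dd th k'.+1 i j * act k' (realization l dd th k' x j)
  end.

Definition cube (n : nat) (a b : R) : set (n.-tuple R) :=
  [set x | forall i : 'I_n, a <= tnth x i <= b].

Definition sqerr (l : nat -> nat) (L dd : nat) (th : 'rV[R]_dd)
  (f : (l 0%N).-tuple R -> (l L).-tuple R) (x : (l 0%N).-tuple R) : \bar R :=
  ((euclid (l L) (fun i => realization l dd th L x i - tnth (f x) i)) ^+ 2)%:E.

Definition loss (l : nat -> nat) (L dd : nat) (a b : R)
  (mu : {measure set ((l 0%N).-tuple R) -> \bar R})
  (f : (l 0%N).-tuple R -> (l L).-tuple R) (th : 'rV[R]_dd) : R :=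
  fine (\int[mu]_(x in cube (l 0%N) a b) sqerr l L dd th f x).

End ANN.

From HB Require Import structures.
From mathcomp Require Import all_boot all_order all_algebra.
From mathcomp Require Import all_classical all_reals all_analysis.
From mathcomp Require Import ring lra.
Import Order.TTheory GRing.Theory Num.Theory.
Import numFieldNormedType.Exports.
Local Open Scope classical_set_scope.
Local Open Scope ring_scope.

(* On the compact set K the parameters are bounded, so by induction over the
   layers (affine maps with bounded weights, followed by the 1-Lipschitz ReLU)
   the realizations are bounded on the cube and Lipschitz in the parameters.
   Since (u - f)^2 - (v - f)^2 = (u - v)(u + v - 2f), the squared error then
   moves by at most a multiple of |theta - vartheta| (1 + |f|^2), which is
   integrable: mu is finite and, as L > 0, the loss at theta = 0 is the
   integral of |f|^2. *)

Section Elementary.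
Context {R : realType}.

Lemma ler_norm_sum_const n (F : 'I_n -> R) c :
  (forall j, `|F j| <= c) -> `|\sum_(j < n) F j| <= n%:R * c.
Proof.
move=> Fc; apply: le_trans (ler_norm_sum _ _ _) _.
apply: le_trans (ler_sum _ (fun j _ => Fc j)) _.
by rewrite sumr_const card_ord mulr_natl.
Qed.

Lemma ler_norm_mulB (w w' u u' : R) :
  `|w * u - w' * u'| <= `|w - w'| * `|u| + `|w'| * `|u - u'|.
Proof.
have -> : w * u - w' * u' = (w - w') * u + w' * (u - u') by ring.
by rewrite -!normrM ler_normD.
Qed.

Lemma sqr_sub_le (u v w c B : R) :
  `|u| <= B -> `|v| <= B -> `|u - v| <= c -> 0 <= c ->
  (u - w) ^+ 2 <= (v - w) ^+ 2 + c * (2 * B + 1) + c * w ^+ 2.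
Proof.
move=> uB vB uvc c0.
have uvw : `|u + v - 2 * w| <= 2 * B + 1 + w ^+ 2.
  apply: le_trans (ler_normD _ _) _; rewrite normrN normrM ger0_norm //.
  have := ler_normD u v; have -> : w ^+ 2 = `|w| ^+ 2 by rewrite real_normK ?num_real.
  have : 2 * `|w| <= 1 + `|w| ^+ 2 by have := sqr_ge0 (`|w| - 1); nra.
  lra.
have : (u - v) * (u + v - 2 * w) <= c * (2 * B + 1 + w ^+ 2).
  by apply: le_trans (ler_norm _) _; rewrite normrM ler_pM.
have -> : (u - w) ^+ 2 = (v - w) ^+ 2 + (u - v) * (u + v - 2 * w) by ring.
lra.
Qed.

Lemma sum_sqr_sub_le n (u v w : 'I_n -> R) (c B : R) :
  (forall i, `|u i| <= B) -> (forall i, `|v i| <= B) ->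
  (forall i, `|u i - v i| <= c) -> 0 <= c ->
  \sum_(i < n) (u i - w i) ^+ 2 <=
  \sum_(i < n) (v i - w i) ^+ 2 + c * (n%:R * (2 * B + 1)) + c * \sum_(i < n) w i ^+ 2.
Proof.
move=> uB vB uvc c0.
have -> : c * (n%:R * (2 * B + 1)) = \sum_(i < n) c * (2 * B + 1).
  by rewrite sumr_const card_ord mulr_natl mulrnAr.
rewrite mulr_sumr -!big_split /=.
by apply: ler_sum => i _; apply: sqr_sub_le.
Qed.

Lemma euclid_sqr n (v : 'I_n -> R) : euclid R n v ^+ 2 = \sum_(i < n) v i ^+ 2.
Proof. by rewrite sqr_sqrtr //; apply: sumr_ge0 => i _; exact: sqr_ge0. Qed.

Lemma norm_le_euclid n (v : 'I_n -> R) i : `|v i| <= euclid R n v.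
Proof.
rewrite /euclid -sqrtr_sqr ler_sqrt; last by apply: sumr_ge0 => j _; exact: sqr_ge0.
by rewrite (bigD1 i) //= lerDl; apply: sumr_ge0 => j _; exact: sqr_ge0.
Qed.

Lemma euclid_le_const n (v : 'I_n -> R) (c : R) :
  0 <= c -> (forall i, `|v i| <= c) -> euclid R n v <= n%:R * c.
Proof.
move=> c0 vc; have nc0 : 0 <= n%:R * c by rewrite mulr_ge0.
rewrite -(ger0_norm nc0) -sqrtr_sqr ler_sqrt; last exact: sqr_ge0.
apply: (@le_trans _ _ (\sum_(i < n) c ^+ 2)).
  by apply: ler_sum => i _; rewrite -real_normK ?num_real // lerXn2r ?nnegrE.
rewrite sumr_const card_ord -[c ^+ 2 *+ n]mulr_natl exprMn.
apply: ler_wpM2r; first exact: sqr_ge0.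
rewrite -natrX ler_nat; case: n {v vc nc0} => // n.
by rewrite expnS leq_pmulr // expn_gt0.
Qed.

Lemma compact_rV_coord_bounded n (K : set 'rV[R]_n) :
  compact K -> exists M, 0 <= M /\ forall x i, K x -> `|x 0 i| <= M.
Proof.
move=> /compact_bounded [M0 [_ HM]]; exists (`|M0| + 1); split=> // x i Kx.
apply: (@le_trans _ _ (mx_norm x)).
  by rewrite mx_normrE (bigD1 (0, i)) //= le_max lexx.
by apply: (HM (`|M0| + 1)) => //; rewrite (le_lt_trans (ler_norm _)) // ltrDl.
Qed.

End Elementary.

Section Network.
Variables (R : realType) (l : nat -> nat) (dd : nat).

Definition param_dist (th vth : 'rV[R]_dd) := euclid R dd (fun i => th 0 i - vth 0 i).

Lemma param_dist_ge0 th vth : 0 <= param_dist th vth.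
Proof. exact: sqrtr_ge0. Qed.

Lemma param_distC th vth : param_dist th vth = param_dist vth th.
Proof.
by congr Num.sqrt; apply: eq_bigr => i _; rewrite -sqrrN opprB.
Qed.

Lemma th_at_dist_le (th vth : 'rV[R]_dd) n :
  `|th_at R dd th n - th_at R dd vth n| <= param_dist th vth.
Proof.
rewrite /th_at; case: insubP => [i _ _|_]; first exact: norm_le_euclid.
by rewrite subr0 normr0 param_dist_ge0.
Qed.

Lemma norm_th_at_le (th : 'rV[R]_dd) M n :
  0 <= M -> (forall j, `|th 0 j| <= M) -> `|th_at R dd th n| <= M.
Proof. by move=> M0 thM; rewrite /th_at; case: insubP => [i _ _|_]; rewrite ?normr0. Qed.

Lemma th_at0 n : th_at R dd 0 n = 0.
Proof. by rewrite /th_at; case: insubP => // i _ _; rewrite mxE. Qed.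

Lemma norm_act_le k (y : R) : `|act R k y| <= `|y|.
Proof. by rewrite /act; case: eqP => // _; case: (leP 0 y); rewrite ?normr0. Qed.

Lemma act_lipschitz k (y z : R) : `|act R k y - act R k z| <= `|y - z|.
Proof.
rewrite /act; case: eqP => // _.
case: (leP 0 y) => y0; case: (leP 0 z) => z0 //.
- rewrite subr0 ger0_norm // ger0_norm; lra.
- rewrite sub0r normrN ger0_norm // ler0_norm; lra.
- by rewrite subrr normr0.
Qed.

Lemma realization0 k x (i : 'I_(l k)) : (0 < k)%N -> realization R l dd 0 k x i = 0.
Proof.
case: k i => // k i _ /=.
rewrite /bias th_at0 add0r big1 // => j _.
by rewrite /wgt th_at0 mul0r.
Qed.

Variables (a b : R).

Lemma norm_cube_le n x i : cube R n a b x -> `|tnth x i| <= `|a| + `|b|.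
Proof.
move=> /(_ i) /andP [ax xb]; rewrite ler_norml.
have := ler_norm b; have := ler_norm a; have := normr_ge0 a; have := normr_ge0 b.
rewrite -(normrN a); have := ler_norm (- a); lra.
Qed.

Lemma realization_bounded_lipschitz (K : set 'rV[R]_dd) (M : R) k :
  0 <= M -> (forall th j, K th -> `|th 0 j| <= M) ->
  exists B C : R, [/\ 0 <= B, 0 <= C &
  forall th vth x, K th -> K vth -> cube R (l 0%N) a b x -> forall i : 'I_(l k),
  `|realization R l dd th k x i| <= B /\
  `|realization R l dd th k x i - realization R l dd vth k x i| <= C * param_dist th vth].
Proof.
move=> M0 KM; elim: k => [|k [B [C [B0 C0 IH]]]].
  exists (`|a| + `|b|), 0; split=> [||th vth x _ _ cx i]; [by rewrite addr_ge0 | by [] |].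
  by rewrite /= subrr normr0 mul0r; split=> //; exact: norm_cube_le.
exists (M + (l k)%:R * (M * B)), (1 + (l k)%:R * (B + M * C)).
split=> [||th vth x Kth Kvth cx i /=]; first by rewrite addr_ge0 // !mulr_ge0.
  by rewrite addr_ge0 // mulr_ge0 // addr_ge0 // mulr_ge0.
have thM := KM th ^~ Kth; have vthM := KM vth ^~ Kvth.
have [actB actC] : (forall j, `|act R k (realization R l dd th k x j)| <= B) /\
    (forall j, `|act R k (realization R l dd th k x j)
                 - act R k (realization R l dd vth k x j)| <= C * param_dist th vth).
  split=> j; [apply: le_trans (norm_act_le _ _) _ | apply: le_trans (act_lipschitz _ _ _) _];
    by have [] := IH th vth x Kth Kvth cx j.
split.
  apply: le_trans (ler_normD _ _) _; apply: lerD; first exact: norm_th_at_le.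
  apply: ler_norm_sum_const => j; rewrite normrM.
  by apply: ler_pM => //; exact: norm_th_at_le.
rewrite opprD addrACA -sumrB; apply: le_trans (ler_normD _ _) _.
have -> : (1 + (l k)%:R * (B + M * C)) * param_dist th vth =
  param_dist th vth + (l k)%:R * (param_dist th vth * B + M * (C * param_dist th vth)) by ring.
apply: lerD; first exact: th_at_dist_le.
apply: ler_norm_sum_const => j; apply: le_trans (ler_norm_mulB _ _ _ _) _.
by apply: lerD; apply: ler_pM => //; [exact: th_at_dist_le | exact: norm_th_at_le].
Qed.

Lemma measurable_cube n : measurable (cube R n a b).
Proof.
have -> : cube R n a b =
    \bigcap_(i in [set: 'I_n]) ((fun x : n.-tuple R => tnth x i) @^-1` `[a, b]%classic).
  apply/seteqP; split=> x /= xab i; first by move=> _; rewrite /= in_itv; exact: xab.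
  by have := xab i I; rewrite /= in_itv.
apply: fin_bigcap_measurable; first exact: finite_finset.
move=> i _; rewrite -[X in measurable X]setTI.
exact: (measurable_tnth i measurableT (measurable_itv _)).
Qed.

Lemma measurable_realization (th : 'rV[R]_dd) k (i : 'I_(l k)) :
  measurable_fun setT (fun x => realization R l dd th k x i).
Proof.
elim: k i => [|k IH] i /=; first exact: measurable_tnth.
apply: measurable_realfun.measurable_funD; first exact: measurable_cst.
apply: measurable_sum => j.
apply: measurable_realfun.measurable_funM; first exact: measurable_cst.
rewrite /act; case: (k == 0%N); first exact: IH.
by apply: measurable_realfun.measurable_maxr; [exact: IH | exact: measurable_cst].
Qed.

End Network.

Arguments param_dist {R dd}.

Lemma ge0_integral_le_affine {d} {T : measurableType d} {R : realType}
    (mu : {measure set T -> \bar R}) [D : set T] [g h k : T -> R] [c e : R] :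
  measurable D -> measurable_fun D g -> measurable_fun D h -> measurable_fun D k ->
  (forall x, D x -> 0 <= g x) -> (forall x, D x -> 0 <= h x) -> (forall x, D x -> 0 <= k x) ->
  0 <= c -> 0 <= e -> (forall x, D x -> g x <= h x + c + e * k x) ->
  (\int[mu]_(x in D) (g x)%:E <=
   \int[mu]_(x in D) (h x)%:E + c%:E * mu D + e%:E * \int[mu]_(x in D) (k x)%:E)%E.
Proof.
move=> mD mg mh mk g0 h0 k0 c0 e0 ghk.
have mEh := (measurable_realfun.measurable_EFinP _ _).2 mh.
have mEk := (measurable_realfun.measurable_EFinP _ _).2 mk.
apply: (@le_trans _ _ (\int[mu]_(x in D) ((h x)%:E + c%:E + e%:E * (k x)%:E))%E).
  apply: ge0_le_integral => //; first exact/measurable_realfun.measurable_EFinP.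
  by apply: emeasurable_funD; [apply: emeasurable_funD | apply: emeasurable_funM].
rewrite ge0_integralD //.
- by rewrite ge0_integralD // integral_cst // ge0_integralZl.
- by move=> x Dx; rewrite -EFinD lee_fin addr_ge0 ?h0.
- by apply: emeasurable_funD.
- by move=> x Dx; rewrite -EFinM lee_fin mulr_ge0 ?k0.
- by apply: emeasurable_funM.
Qed.

Section Loss.
Variables (R : realType) (l : nat -> nat) (L dd : nat) (a b : R).
Variables (mu : {measure set ((l 0%N).-tuple R) -> \bar R})
  (f : (l 0%N).-tuple R -> (l L).-tuple R).
Hypotheses (hL : (0 < L)%N) (hmu : (mu (cube R (l 0%N) a b) < +oo)%E)
  (hf : measurable_fun (cube R (l 0%N) a b) f)
  (hfin : forall th : 'rV[R]_dd,
     (\int[mu]_(x in cube R (l 0%N) a b) sqerr R l L dd th f x)%E \is a fin_num).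

Local Notation D := (cube R (l 0%N) a b).

Let sqerr_sum (th : 'rV[R]_dd) x :=
  \sum_(i < l L) (realization R l dd th L x i - tnth (f x) i) ^+ 2.

Let measurable_sqerr_sum th : measurable_fun D (sqerr_sum th).
Proof.
apply: measurable_sum => i; apply: measurable_realfun.measurable_funX.
apply: measurable_realfun.measurable_funB; last exact: measurableT_comp (measurable_tnth i) hf.
exact: measurable_funS measurableT (@subsetT _ D) (measurable_realization R l dd th L i).
Qed.

Let sqerr_sum_ge0 th x : 0 <= sqerr_sum th x.
Proof. by apply: sumr_ge0 => i _; exact: sqr_ge0. Qed.

Let integral_sqerr_sum th :
  (\int[mu]_(x in D) (sqerr_sum th x)%:E)%E = (loss R l L dd a b mu f th)%:E.
Proof.
have sqerrE : (\int[mu]_(x in D) sqerr R l L dd th f x =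
               \int[mu]_(x in D) (sqerr_sum th x)%:E)%E.
  by apply: eq_integral => x _; rewrite /sqerr euclid_sqr.
by rewrite /loss -sqerrE fineK.
Qed.

Lemma loss_le_realization_dist (th vth : 'rV[R]_dd) (B c : R) : 0 <= B -> 0 <= c ->
  (forall x, D x -> forall i,
     [/\ `|realization R l dd th L x i| <= B, `|realization R l dd vth L x i| <= B
       & `|realization R l dd th L x i - realization R l dd vth L x i| <= c]) ->
  loss R l L dd a b mu f th <= loss R l L dd a b mu f vth +
    c * ((l L)%:R * (2 * B + 1) * fine (mu D) + loss R l L dd a b mu f 0).
Proof.
move=> B0 c0 thvth.
have sqerr_sum_le x : D x ->
    sqerr_sum th x <= sqerr_sum vth x + c * ((l L)%:R * (2 * B + 1)) + c * sqerr_sum 0 x.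
  move=> Dx; have -> : sqerr_sum 0 x = \sum_(i < l L) tnth (f x) i ^+ 2.
    by apply: eq_bigr => i _; rewrite realization0 // sub0r sqrrN.
  by apply: sum_sqr_sub_le => // i; have [] := thvth x Dx i.
set m := fine (mu D); have muD : mu D = m%:E by rewrite fineK // ge0_fin_numE.
have cE0 : 0 <= c * ((l L)%:R * (2 * B + 1)) by rewrite !mulr_ge0 // addr_ge0 // mulr_ge0.
have := ge0_integral_le_affine mu (measurable_cube R a b _) (measurable_sqerr_sum th)
  (measurable_sqerr_sum vth) (measurable_sqerr_sum 0) (fun x _ => sqerr_sum_ge0 th x)
  (fun x _ => sqerr_sum_ge0 vth x) (fun x _ => sqerr_sum_ge0 0 x) cE0 c0 sqerr_sum_le.
rewrite !integral_sqerr_sum muD -!EFinM -!EFinD lee_fin.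
by rewrite (mulrDr c) !mulrA addrA.
Qed.

End Loss.

Theorem lemma2p10 (R : realType) (L : nat) (hL : (0 < L)%N)
  (l : nat -> nat) (hl : forall k, (0 < l k)%N)
  (dd : nat) (hdd : dd = dpar l L)
  (a b : R) (hab : a < b)
  (mu : {measure set ((l 0%N).-tuple R) -> \bar R})
  (hmu : (mu (cube R (l 0%N) a b) < +oo)%E)
  (f : (l 0%N).-tuple R -> (l L).-tuple R)
  (hf : measurable_fun (cube R (l 0%N) a b) f)
  (hfin : forall th : 'rV[R]_dd,
     (\int[mu]_(x in cube R (l 0%N) a b) sqerr R l L dd th f x)%E \is a fin_num)
  (K : set 'rV[R]_dd) (hK : compact K) :
  exists LL : R, forall th vth : 'rV[R]_dd, K th -> K vth ->
    ((`|loss R l L dd a b mu f th - loss R l L dd a b mu f vth|)%:E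
     + ereal_sup [set (euclid R (l L) (fun i => realization R l dd th L x i
                                      - realization R l dd vth L x i))%:E
                 | x in cube R (l 0%N) a b]
     <= (LL * euclid R dd (fun i => th 0 i - vth 0 i))%:E)%E.
Proof.
have [M [M0 KM]] := compact_rV_coord_bounded _ _ hK.
have [B [C [B0 C0 BC]]] := realization_bounded_lipschitz R l dd a b _ _ L M0 KM.
pose E := (l L)%:R * (2 * B + 1) * fine (mu (cube R (l 0%N) a b)) + loss R l L dd a b mu f 0.
have loss_le th vth : K th -> K vth ->
    loss R l L dd a b mu f th <= loss R l L dd a b mu f vth + C * E * param_dist th vth.
  move=> Kth Kvth; rewrite mulrAC; apply: loss_le_realization_dist => //.
    by rewrite mulr_ge0 ?param_dist_ge0.
  move=> x Dx i; have [thB thvth] := BC th vth x Kth Kvth Dx i.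
  by split=> //; have [] := BC vth th x Kvth Kth Dx i.
exists (C * E + (l L)%:R * C) => th vth Kth Kvth.
rewrite mulrDl EFinD; apply: leeD.
  rewrite lee_fin ler_norml.
  have := loss_le th vth Kth Kvth; have := loss_le vth th Kvth Kth.
  rewrite param_distC /param_dist; lra.
apply: ge_ereal_sup => _ [x Dx <-]; rewrite lee_fin -mulrA.
apply: euclid_le_const; first by rewrite mulr_ge0 ?param_dist_ge0.
by move=> i; have [] := BC th vth x Kth Kvth Dx i.
Qed.
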